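(* Consider the linear network processes (all activation and output functions replaced by the identity) with input $x^{(t)}\in\mathbb{R}^{p_x}$ and i.i.d. errors $\varepsilon^{(t)}$: (RNN) $y^{(t)}=W_{zh}h^{(t)}+\varepsilon^{(t)}$, $h^{(t)}=W_{hh}h^{(t-1)}+W_{hx}x^{(t)}$; (MRNNF) $y^{(t)}=W_{zh}h^{(t)}+W_{zm}m^{(t)}+\varepsilon^{(t)}$, $h^{(t)}=W_{hh}h^{(t-1)}+W_{hx}x^{(t)}$, $m^{(t)}=W_{mm}m^{(t-1)}+W_{mf}\big((I-\mathcal{B})^d-I\big)x^{(t)}$, with a constant memory parameter $d=(d_1,\dots,d_{p_x})'$, $d_i\in(0,0.5)$. Then, in terms of the definition of long memory network process below, the MRNNF has the capability of handling long-range dependence data (its linear network process can have long memory), while the RNN cannot (its linear network process never has long memory).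
   Context: $B$ is the backshift operator, $B^jX_t=X_{t-j}$. For scalar $d$, $(1-B)^d=\sum_{j=0}^\infty w_j(d)B^j$ with $w_j(d)=\Gamma(j-d)/(j!\,\Gamma(-d))=\prod_{i=0}^{j-1}(i-d)/(i+1)$, and $w_j(d)$ is asymptotically proportional to $j^{-d-1}$. For a vector $d=(d_1,\dots,d_{p_x})'$, $(I-\mathcal{B})^d$ is the diagonal operator $\mathrm{diag}((1-B)^{d_1},\dots,(1-B)^{d_{p_x}})$ acting componentwise. A network process of the form $y^{(t)}=\sum_{k=0}^\infty A_k x^{(t-k)}+\varepsilon^{(t)}$ with coefficient matrices $A_k$ and i.i.d. $\varepsilon^{(t)}$ has long memory if there exist indices $i,j$ and $d\in(0,0.5)$ such that $(A_k)_{ij}\sim k^{-d-1}$ as $k\to\infty$ (decay at this polynomial rate). A network is said to have the capability of handling long-range dependence data if its linear network process (obtained by letting all output and activation functions be the identity) has long memory in this sense. *)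

From HB Require Import structures.
From mathcomp Require Import all_boot all_order all_algebra.
From mathcomp Require Import all_classical all_reals all_analysis.
Set Implicit Arguments. Unset Strict Implicit. Unset Printing Implicit Defensive.
Import Order.TTheory GRing.Theory Num.Theory.
Import numFieldNormedType.Exports.
Local Open Scope classical_set_scope.
Local Open Scope ring_scope.

(* Fractional differencing weights: (1-B)^d = \sum_j w_j(d) B^j,
   w_j(d) = \prod_{i=0}^{j-1} (i - d)/(i + 1). *)
Definition fdw {R : realType} (d : R) (j : nat) : R :=
  \prod_(i < j) ((i%:R - d) / (i.+1)%:R).

(* Coefficient matrix of B^j in ((I - B)^d - I), d a vector of memory
   parameters acting componentwise (diagonal operator). For j = 0 the
   coefficient is I - I = 0. *)
Definition fd_minus_I_coef {R : realType} (px : nat) (d : 'I_px -> R) (j : nat)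
  : 'M[R]_px :=
  if j == 0%N then 0 else \matrix_(a < px, b < px) (if a == b then fdw (d a) j else 0).

(* Long memory of a network process y_t = \sum_k A_k x_{t-k} + eps_t:
   some entry (A_k)_{ij} ~ k^{-dd-1}, i.e. (A_k)_{ij} * k^{dd+1} converges
   to a nonzero constant, for some dd in (0, 1/2). *)
Definition long_memory {R : realType} (py px : nat) (A : nat -> 'M[R]_(py, px))
  : Prop :=
  exists (i : 'I_py) (j : 'I_px) (dd : R), 0 < dd < 1/2 /\
    exists c : R, c != 0 /\
      (fun k : nat => A k i j * powR (k%:R) (dd + 1)) @ \oo --> c.

(* Linear RNN: y_t = Wzh h_t + eps_t, h_t = Whh h_{t-1} + Whx x_t.
   Unrolling: y_t = \sum_k Wzh Whh^k Whx x_{t-k} + eps_t. *)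
Definition rnn_coef {R : realType} (py ph px : nat)
  (Wzh : 'M[R]_(py, ph)) (Whh : 'M[R]_ph) (Whx : 'M[R]_(ph, px)) (k : nat)
  : 'M[R]_(py, px) :=
  Wzh *m (Whh ^+ k) *m Whx.

(* Linear MRNNF: additionally m_t = Wmm m_{t-1} + Wmf ((I-B)^d - I) x_t and
   y_t = Wzh h_t + Wzm m_t + eps_t. Unrolling:
   m_t = \sum_l Wmm^l Wmf \sum_j C_j x_{t-l-j}, with C_j the coefficients of
   ((I-B)^d - I), so the coefficient of x_{t-k} is
   Wzh Whh^k Whx + Wzm \sum_{l=0}^k Wmm^l Wmf C_{k-l}. *)
Definition mrnnf_coef {R : realType} (py ph pm px : nat)
  (Wzh : 'M[R]_(py, ph)) (Whh : 'M[R]_ph) (Whx : 'M[R]_(ph, px))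
  (Wzm : 'M[R]_(py, pm)) (Wmm : 'M[R]_pm) (Wmf : 'M[R]_(pm, px))
  (d : 'I_px -> R) (k : nat) : 'M[R]_(py, px) :=
  rnn_coef Wzh Whh Whx k +
  Wzm *m (\sum_(l < k.+1) (Wmm ^+ l) *m Wmf *m fd_minus_I_coef d (k - l)).

(* The weights of (1 - B)^d decay exactly like k^(-d-1): the sequence
   -w_k(d) k^(d+1) is nonincreasing and stays above the nondecreasing positive
   sequence -w_k(d) (k-1) k^d (both comparisons are Bernoulli's inequality
   (1+h)^d <= 1 + d h), so it has a positive limit. An MRNNF whose memory branch
   copies one input coordinate to the output therefore has coefficient w_k(d).
   An RNN coefficient a_k = (Wzh Whh^k Whx)_ij, in contrast, satisfies the linear
   recurrence p(E) a = 0, with p the characteristic polynomial of Whh and E the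
   shift (Cayley-Hamilton). Write p = (X - 1)^r q with q(1) != 0. If a_k k^s -> c
   with s > 0, then a -> 0, so b := q(E) a tends to 0 while its r-th difference
   vanishes; hence b = 0. But b_k k^s -> q(1) c, so c = 0. *)

From HB Require Import structures.
From mathcomp Require Import all_boot all_order all_algebra.
From mathcomp Require Import all_classical all_reals all_analysis.
From mathcomp Require Import ring lra.
Import Order.TTheory GRing.Theory Num.Theory.
Import numFieldNormedType.Exports.
Local Open Scope ring_scope.
Local Open Scope classical_set_scope.

Section fractional_weights.
Variable R : realType.
Implicit Types (d x t : R) (k : nat).

Lemma powR_le_affine x t : 0 < x -> 0 <= t <= 1 -> powR x t <= t * x + (1 - t).
Proof.
move=> x0 /andP[t0 t1].
have := @convex_expR R (Itv01 t0 t1) (ln x) 0.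
rewrite !convRE /= expR0 lnK ?posrE // mulr0 addr0 mulr1.
by rewrite /powR gt_eqF // mulrC.
Qed.

Lemma powR_succ_le x d : 0 < d < 1 -> 1 <= x ->
  (x - d) * powR (x + 1) d <= x * powR x d.
Proof.
move=> /andP[d0 d1] x1.
have x0 : 0 < x by lra.
have -> : powR (x + 1) d = powR x d * powR ((x + 1) / x) d.
  rewrite -powRM ?divr_ge0; try lra.
  by rewrite mulrC divfK ?gt_eqF.
have bernoulli : powR ((x + 1) / x) d <= (x + d) / x.
  have -> : (x + d) / x = d * ((x + 1) / x) + (1 - d) by field; lra.
  by apply: powR_le_affine; [rewrite divr_gt0 //; lra | rewrite !ltW].
rewrite mulrCA [x * _]mulrC ler_wpM2l ?powR_ge0 //.
apply: le_trans (_ : (x - d) * ((x + d) / x) <= x).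
  by rewrite ler_wpM2l //; lra.
rewrite mulrA ler_pdivrMr //; nra.
Qed.

Lemma powR_succ_ge x d : 0 < d < 1 -> 1 <= x ->
  (x - 1) * (x + 1) * powR x d <= x * (x - d) * powR (x + 1) d.
Proof.
move=> /andP[d0 d1] x1.
have x0 : 0 < x + 1 by lra.
have -> : powR x d = powR (x + 1) d * powR (x / (x + 1)) d.
  rewrite -powRM ?divr_ge0; try lra.
  by rewrite mulrC divfK ?gt_eqF.
have bernoulli : powR (x / (x + 1)) d <= (x + 1 - d) / (x + 1).
  have -> : (x + 1 - d) / (x + 1) = d * (x / (x + 1)) + (1 - d) by field; lra.
  by apply: powR_le_affine; [rewrite divr_gt0 //; lra | rewrite !ltW].
rewrite mulrCA [_ * powR (x + 1) d]mulrC ler_wpM2l ?powR_ge0 //.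
apply: le_trans (_ : (x - 1) * (x + 1) * ((x + 1 - d) / (x + 1)) <= x * (x - d)).
  by rewrite ler_wpM2l //; nra.
have -> : (x - 1) * (x + 1) * ((x + 1 - d) / (x + 1)) = (x - 1) * (x + 1 - d).
  by field; lra.
nra.
Qed.

Lemma fdwS d k : fdw d k.+1 = fdw d k * ((k%:R - d) / k.+1%:R).
Proof. by rewrite /fdw big_ord_recr. Qed.

Lemma fdw_lt0 d k : 0 < d < 1 -> (0 < k)%N -> fdw d k < 0.
Proof.
move=> /andP[d0 d1]; elim: k => // -[_ _|k IH _].
  by rewrite fdwS /fdw big_ord0 mul1r sub0r divr1 oppr_lt0.
rewrite fdwS pmulr_llt0 ?IH // divr_gt0 // subr_gt0.
by apply: lt_le_trans d1 _; rewrite ler1n.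
Qed.

Section fdw_asymptotics.
Variable d : R.
Hypothesis d01 : 0 < d < 1.

Let v k := - fdw d k * powR k%:R (d + 1).
Let l k := - fdw d k * (k%:R - 1) * powR k%:R d.

Let w_gt0 k : (0 < k)%N -> 0 < - fdw d k.
Proof. by move=> k0; rewrite oppr_gt0 fdw_lt0. Qed.

Let vE k : v k = - fdw d k * k%:R * powR k%:R d.
Proof.
have d1 : d + 1 == 0 = false by rewrite gt_eqF // ltr_wpDl //; case/andP: d01 => /ltW.
by rewrite /v powRD ?d1 // powRr1 //; ring.
Qed.

Let fdwSN k : - fdw d k.+1 * k.+1%:R = - fdw d k * (k%:R - d).
Proof. by rewrite fdwS; field; rewrite addrC natr1 pnatr_eq0. Qed.

Let v_nonincreasing k : (0 < k)%N -> v k.+1 <= v k.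
Proof.
move=> k0; rewrite !vE fdwSN -!mulrA ler_pM2l ?w_gt0 // -natr1.
by apply: powR_succ_le; rewrite // ler1n.
Qed.

Let l_nondecreasing k : (0 < k)%N -> l k <= l k.+1.
Proof.
move=> k0; rewrite /l.
have -> : - fdw d k.+1 * (k.+1%:R - 1) * powR k.+1%:R d =
          - fdw d k * ((k%:R - d) * k%:R * powR (k%:R + 1) d / (k%:R + 1)).
  by rewrite fdwS -natr1; field; rewrite natr1 pnatr_eq0.
rewrite -mulrA ler_pM2l ?w_gt0 // ler_pdivlMr; last by rewrite natr1 ltr0n.
by rewrite mulrAC [_ * k%:R]mulrC; apply: powR_succ_ge; rewrite // ler1n.
Qed.

Let l_le_v k : (0 < k)%N -> l k <= v k.
Proof.
move=> k0; rewrite vE /l ler_wpM2r ?powR_ge0 // ler_wpM2l ?ltW ?w_gt0 //; lra.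
Qed.

Let l2_le k : (2 <= k)%N -> l 2 <= l k.
Proof.
elim: k => // k IH; rewrite leq_eqVlt ltnS => /predU1P[<-//|k2].
by apply: (le_trans (IH k2)); exact: l_nondecreasing (ltnW k2).
Qed.

Let l2_gt0 : 0 < l 2.
Proof. by rewrite /l mulr_gt0 ?powR_gt0 ?ltr0n // mulr_gt0 ?w_gt0. Qed.

Lemma fdw_powR_cvg :
  exists c : R, c != 0 /\ (fun k => fdw d k * powR k%:R (d + 1)) @ \oo --> c.
Proof.
pose u n := v n.+2.
have u_nonincreasing : nonincreasing_seq u.
  by apply/nonincreasing_seqP => n; apply: v_nonincreasing.
have u_ge n : l 2 <= u n by apply: (le_trans (@l2_le n.+2 isT)); exact: l_le_v.
have u_cvg : cvgn u.
  by apply: nonincreasing_is_cvgn => //; exists (l 2) => _ [n _ <-].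
have u_lim : l 2 <= limn u by apply: limr_ge => //; near=> n.
exists (- limn u); split; first by rewrite oppr_eq0 gt_eqF // (lt_le_trans l2_gt0).
have -> : (fun k => fdw d k * powR k%:R (d + 1)) = fun k => - v k.
  by apply/funext => k; rewrite /v mulNr opprK.
rewrite -(cvg_shiftn 2) /=; apply: cvgN.
by under eq_fun do rewrite addn2.
Unshelve. all: by end_near.
Qed.
End fdw_asymptotics.
End fractional_weights.

(* [poly_shift Q a] is Q(E) a, where E is the forward shift (E a) k = a (k + 1). *)
Definition poly_shift {R : nzRingType} (Q : {poly R}) (a : nat -> R) (k : nat) : R :=
  \sum_(m < size Q) Q`_m * a (k + m)%N.

Definition fwd_diff {R : zmodType} (b : nat -> R) (k : nat) : R := b k.+1 - b k.

Section polynomial_shift.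
Variable R : nzRingType.
Implicit Types (Q : {poly R}) (a : nat -> R).

Lemma poly_shift_wide n Q a k : (size Q <= n)%N ->
  poly_shift Q a k = \sum_(m < n) Q`_m * a (k + m)%N.
Proof.
move=> Qn; rewrite /poly_shift (big_ord_widen n (fun m => Q`_m * a (k + m)%N) Qn).
rewrite big_mkcond; apply: eq_bigr => m _.
by case: ltnP => // Qm; rewrite nth_default ?mul0r.
Qed.

Lemma poly_shift_XsubC1M Q a :
  poly_shift (('X - 1) * Q) a = fwd_diff (poly_shift Q a).
Proof.
apply/funext => k; have sizeXQ : (size (('X - 1) * Q)%R <= (size Q).+1)%N.
  by apply: leq_trans (size_polyMleq _ _) _; rewrite -polyC1 size_XsubC.
rewrite /fwd_diff (poly_shift_wide _ _ _ _ sizeXQ) (poly_shift_wide _ _ _ k (leqnSn _)).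
under eq_bigr do rewrite mulrBl mul1r coefB mulrBl.
rewrite sumrB big_ord_recl coefXM mul0r add0r; congr (_ - _).
by apply: eq_bigr => m _; rewrite coefXM /= addnS.
Qed.

Lemma poly_shift_XsubC1XM r Q a :
  poly_shift (('X - 1) ^+ r * Q) a = iter r fwd_diff (poly_shift Q a).
Proof.
elim: r => [|r IH]; first by rewrite expr0 mul1r.
by rewrite exprS -mulrA poly_shift_XsubC1M IH.
Qed.
End polynomial_shift.

Lemma poly_shift_mx_pow (R : comNzRingType) p q n (B : 'M[R]_(p, n.+1))
    (A : 'M[R]_n.+1) (C : 'M[R]_(n.+1, q)) i j Q k :
  poly_shift Q (fun k => (B *m A ^+ k *m C) i j) k
    = (B *m (A ^+ k * horner_mx A Q) *m C) i j.
Proof.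
have -> : horner_mx A Q = \sum_(m < size Q) Q`_m *: A ^+ m.
  rewrite -[in LHS](coefK Q) poly_def raddf_sum; apply: eq_bigr => m _.
  by rewrite [LHS]horner_mxZ rmorphXn /= horner_mx_X.
rewrite mulr_sumr mulmx_sumr mulmx_suml summxE; apply: eq_bigr => m _.
by rewrite -scalerAr -exprD -scalemxAr -scalemxAl [RHS]mxE.
Qed.

Lemma poly_shift_char_poly (R : comNzRingType) p q n (B : 'M[R]_(p, n.+1))
    (A : 'M[R]_n.+1) (C : 'M[R]_(n.+1, q)) i j k :
  poly_shift (char_poly A) (fun k => (B *m A ^+ k *m C) i j) k = 0.
Proof. by rewrite poly_shift_mx_pow Cayley_Hamilton mulr0 mulmx0 mul0mx mxE. Qed.

Section power_decay.
Variable R : realType.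
Implicit Types (Q : {poly R}) (a b : nat -> R) (s c : R).

Lemma cvg_ratio_powR s m :
  (fun k : nat => powR (k.+1%:R / (k.+1 + m)%:R) s) @ \oo --> (1 : R).
Proof.
have ratioE : (fun k : nat => k.+1%:R / (k.+1 + m)%:R : R) =
    fun k => 1 - m%:R * harmonic (k + m).
  apply/funext => k; rewrite /harmonic /= -addSn natrD; field.
  by rewrite nat1r -natrD pnatr_eq0.
have ratio_cvg : (fun k : nat => k.+1%:R / (k.+1 + m)%:R) @ \oo --> (1 : R).
  rewrite ratioE -[X in _ --> X]subr0; apply: cvgB; first exact: cvg_cst.
  rewrite -(mulr0 m%:R); apply: cvgM; first exact: cvg_cst.
  by rewrite (cvg_shiftn m (@harmonic R)); exact: cvg_harmonic.
have powR_cont1 : {for (1 : R), continuous (fun x : R => powR x s)}.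
  apply: differentiable_continuous; apply/derivable1_diffP.
  by apply: derivable_powR; rewrite in_itv /= andbT ltr01.
by have := continuous_cvg _ powR_cont1 ratio_cvg; rewrite powR1; exact.
Qed.

Lemma cvg_shift_powR a s c m :
  (fun k => a k * powR k%:R s) @ \oo --> c ->
  (fun k => a (k + m)%N * powR k%:R s) @ \oo --> c.
Proof.
move=> acvg; rewrite -(cvg_shiftn 1) /= -[c]mulr1.
have -> : (fun k => a (k + 1 + m)%N * powR (k + 1)%N%:R s) = fun k =>
    a (k.+1 + m)%N * powR (k.+1 + m)%N%:R s * powR (k.+1%:R / (k.+1 + m)%:R) s.
  apply/funext => k; rewrite addn1 -mulrA -powRM ?divr_ge0 //.
  by rewrite mulrCA divff ?mulr1 // pnatr_eq0 addSn.
apply: cvgM; last exact: cvg_ratio_powR.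
by move: acvg; rewrite -(cvg_shiftn m.+1) /=; under eq_fun do rewrite -addSnnS.
Qed.

Lemma cvg_poly_shift_powR Q {a s c} :
  (fun k => a k * powR k%:R s) @ \oo --> c ->
  (fun k => poly_shift Q a k * powR k%:R s) @ \oo --> Q.[1] * c.
Proof.
move=> acvg; have -> : (fun k => poly_shift Q a k * powR k%:R s) =
    fun k => \sum_(m < size Q) Q`_m * (a (k + m)%N * powR k%:R s).
  by apply/funext => k; rewrite mulr_suml; apply: eq_bigr => m _; rewrite mulrA.
rewrite horner_coef mulr_suml; under eq_bigr do rewrite expr1n mulr1.
apply: (cvg_big add_continuous) => // m _.
by apply: cvgM; [exact: cvg_cst | exact: cvg_shift_powR].
Qed.

Lemma cvg_harmonic_at_right : (@harmonic R) @ \oo --> (0 : R)^'+.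
Proof.
move=> A; rewrite !near_simpl near_withinE => /cvg_harmonic harm.
have {}harm : \forall k \near \oo, 0 < harmonic k -> A (harmonic k) := harm.
by apply: filterS harm => k; apply; exact: harmonic_gt0.
Qed.

Lemma cvg0_of_powR a s c : 0 < s ->
  (fun k => a k * powR k%:R s) @ \oo --> c -> a @ \oo --> 0.
Proof.
move=> s0 acvg; rewrite -(cvg_shiftn 1).
have -> : (fun k => a (k + 1)%N) =
    fun k => a (k + 1)%N * powR (k + 1)%N%:R s * powR (harmonic k) s.
  apply/funext => k; rewrite -mulrA -powRM ?harmonic_ge0 // addn1 /=.
  by rewrite divff ?pnatr_eq0 // powR1 mulr1.
rewrite -(cvg_shiftn 1 (fun k => a k * powR k%:R s)) in acvg.
have := cvgM acvg (cvg_comp _ _ cvg_harmonic_at_right (powR_cvg0 s0)).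
by rewrite mulr0; apply.
Qed.

Lemma fwd_diff_iter_eq0 r b : (forall k, iter r fwd_diff b k = 0) ->
  b @ \oo --> 0 -> forall k, b k = 0.
Proof.
elim: r b => [|r IH] b iter_eq0 b_cvg; first exact: iter_eq0.
have fwd_diff_eq0 : forall k, fwd_diff b k = 0.
  apply: IH => [k|]; first by rewrite -iterSr.
  have bS_cvg : (fun k => b k.+1) @ \oo --> 0.
    by move: b_cvg; rewrite -(cvg_shiftn 1); under eq_fun do rewrite addn1.
  by have := cvgB bS_cvg b_cvg; rewrite subr0; apply.
have b_const k : b k = b 0.
  elim: k => // k <-; apply/eqP; rewrite -subr_eq0; apply/eqP; exact: fwd_diff_eq0.
rewrite (funext b_const) in b_cvg.
by move=> k; rewrite b_const; exact: cvg_unique _ (cvg_cst _) b_cvg.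
Qed.

Lemma recurrent_powR_cvg_eq0 p a s c :
  p != 0 -> (forall k, poly_shift p a k = 0) -> 0 < s -> (fun k => a k * powR k%:R s) @ \oo --> c -> c = 0.
Proof.
move=> p0 a_rec s0 a_cvg.
have [r [q]] := multiplicity_XsubC p 1; rewrite p0 polyC1 /= => q1 pE.
have q_shift_eq0 : forall k, poly_shift q a k = 0.
  apply: (@fwd_diff_iter_eq0 r) => [k|].
    by rewrite -poly_shift_XsubC1XM mulrC -pE.
  have a_cvg0 : (fun k => a k * powR k%:R 0) @ \oo --> 0.
    by under eq_fun do rewrite powRr0 mulr1; exact: cvg0_of_powR s0 a_cvg.
  have := cvg_poly_shift_powR q a_cvg0; rewrite mulr0.
  by under eq_fun do rewrite powRr0 mulr1.
have := cvg_poly_shift_powR q a_cvg; under eq_fun do rewrite q_shift_eq0 mul0r.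
move=> q_shift_cvg.
have /eqP : q.[1] * c = 0 by exact: cvg_unique _ q_shift_cvg (cvg_cst 0).
by rewrite mulf_eq0 -[_.[1] == 0]/(root q 1) (negbTE q1) => /eqP.
Qed.
End power_decay.

Lemma mul_delta_mx_entry (R : pzSemiRingType) m n p (i : 'I_m) (j : 'I_n)
    (C : 'M[R]_(n, p)) k :
  (delta_mx i j *m C) i k = C j k.
Proof.
rewrite mxE (bigD1 j) //= mxE !eqxx mul1r big1 ?addr0 // => l lj.
by rewrite mxE (negbTE lj) andbF mul0r.
Qed.

Section networks.
Variable R : realType.

Lemma not_long_memory_of_recurrent py px (A : nat -> 'M[R]_(py, px)) :
  (forall i j, exists2 p : {poly R}, p != 0 &
     forall k, poly_shift p (fun k => A k i j) k = 0) ->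
  ~ long_memory A.
Proof.
move=> A_rec [i [j [dd [/andP[dd0 _] [c [c0 A_cvg]]]]]].
have [p p0 p_rec] := A_rec i j.
move/eqP: c0; apply; apply: recurrent_powR_cvg_eq0 p0 p_rec _ A_cvg.
by rewrite addr_gt0.
Qed.

Lemma rnn_coef_recurrent px py ph (Wzh : 'M[R]_(py, ph)) (Whh : 'M[R]_ph)
    (Whx : 'M[R]_(ph, px)) i j :
  exists2 p : {poly R}, p != 0 &
    forall k, poly_shift p (fun k => rnn_coef Wzh Whh Whx k i j) k = 0.
Proof.
case: ph Wzh Whh Whx => [|n] Wzh Whh Whx.
  exists 1 => [|k]; first exact: oner_neq0.
  by rewrite /poly_shift big1 // => m _; rewrite /rnn_coef thinmx0 !mul0mx mxE mulr0.
exists (char_poly Whh); first exact: monic_neq0 (char_poly_monic _).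
exact: poly_shift_char_poly.
Qed.

Lemma fd_minus_I_coef_diag px (d : 'I_px -> R) a k : (0 < k)%N ->
  fd_minus_I_coef d k a a = fdw (d a) k.
Proof. by case: k => // k _; rewrite /fd_minus_I_coef mxE eqxx. Qed.

Lemma mrnnf_coef_memory py ph pm px (Whh : 'M[R]_ph) (Whx : 'M[R]_(ph, px))
    (Wzm : 'M[R]_(py, pm)) (Wmf : 'M[R]_(pm, px)) d k :
  mrnnf_coef 0 Whh Whx Wzm 0 Wmf d k = Wzm *m Wmf *m fd_minus_I_coef d k.
Proof.
rewrite /mrnnf_coef /rnn_coef !mul0mx add0r big_ord_recl expr0 mul1mx subn0.
rewrite big1 ?addr0 ?mulmxA // => l _.
by rewrite exprS mul0r !mul0mx.
Qed.

Lemma long_memory_fdw_entry py px (A : nat -> 'M[R]_(py, px)) i j dd :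
  0 < dd < 1/2 -> (forall k, (0 < k)%N -> A k i j = fdw dd k) -> long_memory A.
Proof.
move=> dd_range A_fdw; exists i, j, dd; split => //.
have dd01 : 0 < dd < 1 by case/andP: dd_range => dd0 dd12; rewrite dd0 /=; lra.
have [c [c0 fdw_cvg]] := @fdw_powR_cvg R dd dd01.
exists c; split => //; rewrite -(cvg_shiftn 1).
under eq_fun do rewrite A_fdw ?addn1 //.
by move: fdw_cvg; rewrite -(cvg_shiftn 1); under eq_fun do rewrite addn1.
Qed.

Lemma mrnnf_long_memory px py ph pm (d : 'I_px -> R) :
  (0 < px)%N -> (0 < py)%N -> (0 < pm)%N -> (forall a, 0 < d a < 1/2) ->
  exists (Wzh : 'M[R]_(py, ph)) (Whh : 'M[R]_ph) (Whx : 'M[R]_(ph, px))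
         (Wzm : 'M[R]_(py, pm)) (Wmm : 'M[R]_pm) (Wmf : 'M[R]_(pm, px)),
    long_memory (mrnnf_coef Wzh Whh Whx Wzm Wmm Wmf d).
Proof.
move=> px0 py0 pm0 d_range.
pose a := Ordinal px0; pose i := Ordinal py0; pose m := Ordinal pm0.
exists 0, 0, 0, (delta_mx i m), 0, (delta_mx m a).
apply: (@long_memory_fdw_entry _ _ _ i a _ (d_range a)) => k k0.
by rewrite mrnnf_coef_memory mul_delta_mx mul_delta_mx_entry fd_minus_I_coef_diag.
Qed.

Lemma rnn_not_long_memory px py ph (Wzh : 'M[R]_(py, ph)) (Whh : 'M[R]_ph)
    (Whx : 'M[R]_(ph, px)) :
  ~ long_memory (rnn_coef Wzh Whh Whx).
Proof. by apply: not_long_memory_of_recurrent => i j; exact: rnn_coef_recurrent. Qed.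
End networks.

Theorem theorem3 (R : realType) :
  (* MRNNF: can have long memory, for any dimensions and any memory parameter d *)
  (forall (px py ph pm : nat) (d : 'I_px -> R),
     (0 < px)%N -> (0 < py)%N -> (0 < pm)%N ->
     (forall a, 0 < d a < 1/2) ->
     exists (Wzh : 'M[R]_(py, ph)) (Whh : 'M[R]_ph) (Whx : 'M[R]_(ph, px))
            (Wzm : 'M[R]_(py, pm)) (Wmm : 'M[R]_pm) (Wmf : 'M[R]_(pm, px)),
       long_memory (mrnnf_coef Wzh Whh Whx Wzm Wmm Wmf d)) /\
  (* RNN: never has long memory *)
  (forall (px py ph : nat)
          (Wzh : 'M[R]_(py, ph)) (Whh : 'M[R]_ph) (Whx : 'M[R]_(ph, px)),
     ~ long_memory (rnn_coef Wzh Whh Whx)).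
Proof.
split; [exact: mrnnf_long_memory | exact: rnn_not_long_memory].
Qed.
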